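(* Let $\mathbf{F}$ be a field of characteristic $3$, let $\lambda=(\lambda_1,\lambda_2)$ be a partition, $m=\lambda_1-\lambda_2$, and let $g\in\mathbf{N}_0$ with $B(m,g)\not\equiv0\pmod3$. Then in $S_\mathbf{F}(\lambda)$ \[e_{m,g}=B(m,g)\,b(g)+\sum_{i>g}\alpha_i b(i)\] for some $\alpha_i\in\mathbf{F}_3$. In particular $e_{m,g}\neq0$ in $S_\mathbf{F}(\lambda)$ if and only if $g\le\lambda_2$.
   Context: $S_\mathbf{F}(\lambda)=\operatorname{End}_{\mathbf{F}S_r}(M^\lambda)$ is a commutative $\mathbf{F}$-algebra with basis $b(0)=\mathbf{1},\dots,b(\lambda_2)$ and multiplication $b(i)b(j)=\sum_{h=\max\{i,j\}}^{i+j}\binom{h}{i}\binom{h}{j}\binom{m+i+j}{i+j-h}b(h)$, $b(a)=0$ for $a>\lambda_2$. $B(m,g)=\binom{m+2g}{g}$. With base-3 digits $(m+2g)_u,g_u$, let $I^{(0)}=\{u: g_u=0,(m+2g)_u=0\}$, $J^{(0)}=\{u:g_u=1,(m+2g)_u=2\}$, $I^{(1)}=\{u:g_u=0,(m+2g)_u=1\}$, $J^{(1)}=\{u:g_u=2,(m+2g)_u=2\}$, $I^{(2)}=\{u:g_u=0,(m+2g)_u=2\}$, $J^{(2)}=\{u:g_u=1,(m+2g)_u=1\}$ and \[e_{m,g}=\prod_{u\in I^{(0)}}(\mathbf{1}+b(3^u)-b(2\cdot3^u))\prod_{u\in J^{(0)}}(b(2\cdot3^u)-b(3^u))\prod_{u\in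 I^{(1)}}(\mathbf{1}-b(2\cdot3^u))\prod_{u\in J^{(1)}}b(2\cdot3^u)\prod_{u\in I^{(2)}}(\mathbf{1}-b(3^u)+b(2\cdot3^u))\prod_{u\in J^{(2)}}(b(3^u)-b(2\cdot3^u)),\] with $b(a)=0$ for $a>\lambda_2$. Here $B(m,g)$ is read as an element of $\mathbf{F}_3\subseteq\mathbf{F}$. *)

From HB Require Import structures.
From mathcomp Require Import all_boot all_order all_algebra.
Set Implicit Arguments. Unset Strict Implicit. Unset Printing Implicit Defensive.
Import Order.TTheory GRing.Theory Num.Theory.
Local Open Scope ring_scope.

(* The algebra S_F(lambda), lambda = (l1, l2), m = l1 - l2, is modelled on
   row vectors 'rV[F]_(l2.+1): coordinate h is the coefficient of b(h). *)

(* structure constant: coefficient of b(h) in b(i) b(j) *)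
Definition Sconst (m i j h : nat) : nat :=
  if (maxn i j <= h <= i + j)%N
  then ('C(h, i) * 'C(h, j) * 'C(m + i + j, i + j - h))%N else 0%N.

Section Schur.
Variables (F : fieldType) (m n : nat).  (* n = lambda_2 *)

Definition Selt := 'rV[F]_n.+1.

(* basis element b(a); equal to 0 when a > lambda_2 *)
Definition bS (a : nat) : Selt := \row_(h < n.+1) ((h : nat) == a)%:R.

Definition Smul (x y : Selt) : Selt :=
  \row_(h < n.+1) \sum_(i < n.+1) \sum_(j < n.+1)
     x 0 i * y 0 j * (Sconst m i j h)%:R.

End Schur.

Definition dig3 (u x : nat) : nat := (x %/ 3 ^ u) %% 3.

Definition Bmg (m g : nat) : nat := 'C(m + 2 * g, g).

Definition efactor (F : fieldType) (m n g u : nat) : Selt F n :=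
  let b := bS F n in
  let a := dig3 u (m + 2 * g) in
  let c := dig3 u g in
  if (c == 0%N) && (a == 0%N) then b 0%N + b (3 ^ u)%N - b (2 * 3 ^ u)%N
  else if (c == 1%N) && (a == 2%N) then b (2 * 3 ^ u)%N - b (3 ^ u)%N
  else if (c == 0%N) && (a == 1%N) then b 0%N - b (2 * 3 ^ u)%N
  else if (c == 2%N) && (a == 2%N) then b (2 * 3 ^ u)%N
  else if (c == 0%N) && (a == 2%N) then b 0%N - b (3 ^ u)%N + b (2 * 3 ^ u)%N
  else if (c == 1%N) && (a == 1%N) then b (3 ^ u)%N - b (2 * 3 ^ u)%N
  else b 0%N. (* never occurs when 3 does not divide B(m,g) (Lucas) *)

(* e_{m,g}: product over digit positions u < m+2g+l2+1; for larger u both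
   digits are 0 and 3^u > l2, so the factor is 1 + 0 - 0 = 1. *)
Definition e_mg (F : fieldType) (m n g : nat) : Selt F n :=
  foldr (@Smul F m n) (bS F n 0) [seq efactor F m n g u | u <- iota 0 (m + 2 * g + n).+1].

From HB Require Import structures.
From mathcomp Require Import all_boot all_order all_algebra zify ring.
Import Order.TTheory GRing.Theory Num.Theory.

(* The element e_{m,g} is a product of one factor per base-3 digit position u,
   each factor being a combination of b(0), b(3^u), b(2 3^u).  Its coefficients
   are computed digit by digit:
   - Lucas's theorem modulo a prime p gives, for j a multiple of p^(k+1) and a
     digit a < p, the structure-constant identity b(a p^k) b(j) = b(j + a p^k)
     in characteristic p (Sconst_digit_mod).
   - Hence multiplying by a combination of the b(a p^k), a < p, turns an element
     supported on multiples of p^(k+1) into one supported on multiples of p^k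
     (Smul_digits_dilate); by induction the coefficient of b(h) in the whole
     product is the product over the digits h_u of h of the coefficient of
     b(h_u 3^u) in the u-th factor (foldr_digits_dilate).
   - Reading off the explicit factors, this digit product vanishes below g and
     equals prod_u C((m+2g)_u, g_u) at g, which is B(m,g) modulo 3 by Lucas
     (digit_prod_below, digit_prod_at).  All coefficients are natural numbers,
     i.e. lie in F_3, and the nonvanishing criterion follows. *)

Section Lucas.
Variables (p : nat) (p_pr : prime p).

Let p_gt0 : 0 < p. Proof. exact: prime_gt0. Qed.

Let mod_last {n} : p %| n.+1 -> n %% p = p.-1.
Proof.
have p_neq1 : p != 1 by rewrite neq_ltn prime_gt1 // orbT.
by move=> pn; rewrite -[n]/(n.+1.-1) modn_pred // pn.
Qed.

Let mod_succ_lt {n} : ~~ (p %| n.+1) -> (n %% p).+1 < p.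
Proof.
by move=> npn; have := ltn_pmod n.+1 p_gt0; rewrite modnS (negPf npn).
Qed.

Lemma lucas n k :
  'C(n, k) = 'C(n %/ p, k %/ p) * 'C(n %% p, k %% p) %[mod p].
Proof.
elim: n k => [|n IHn] [|k]; rewrite ?div0n ?mod0n ?bin0 //.
  rewrite !bin0n.
  have : (k.+1 %/ p != 0) || (k.+1 %% p != 0) by apply/orP; lia.
  by case/orP=> /negPf ->; rewrite ?muln0 ?mul0n mod0n.
rewrite binS -modnDm !IHn modnDm !divnS // !modnS.
case: (boolP (p %| n.+1)) => [pn | npn];
  case: (boolP (p %| k.+1)) => [pk | npk] /=; rewrite ?add0n ?add1n.
- by rewrite (mod_last pn) (mod_last pk) bin0 binn !muln1 binS.
- rewrite (mod_last pn) bin0n -mulnDr -binS -modnMmr.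
  rewrite (prednK p_gt0) (eqP (prime_dvd_bin p_pr _)) ?muln0 //.
  exact: mod_succ_lt.
- have r_small : n %% p < p.-1 by have := mod_succ_lt npn; lia.
  by rewrite (mod_last pk) !bin0 !muln1 (bin_small r_small) muln0 addn0.
- by rewrite binS mulnDr addnC.
Qed.

Lemma bin_scaled_mod k X R Y :
  R < p ^ k -> 'C(p ^ k * X + R, p ^ k * Y) = 'C(X, Y) %[mod p].
Proof.
elim: k X R Y => [|k IHk] X R Y R_lt.
  by move: R_lt; rewrite expn0 ltnS leqn0 => /eqP->; rewrite !mul1n addn0.
rewrite lucas expnSr -!mulnA [p * X]mulnC [p * Y]mulnC !mulnA.
rewrite divnMDl // modnMDl mulnK // modnMl bin0 muln1.
by apply: IHk; rewrite ltn_divLR // -expnSr.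
Qed.

Lemma bin_digit_mod k a q d : a < p -> d <= a * p ^ k ->
  'C(p ^ k.+1 * q + d, a * p ^ k) = (d == a * p ^ k) %[mod p].
Proof.
move=> a_lt d_le; have pk_gt0 : 0 < p ^ k by rewrite expn_gt0 p_gt0.
set e := d %/ p ^ k.
have e_le : e <= a by rewrite -(mulnK a pk_gt0) leq_div2r.
have -> : p ^ k.+1 * q + d = p ^ k * (p * q + e) + d %% p ^ k.
  by rewrite [in LHS](divn_eq d (p ^ k)) expnSr; ring.
rewrite [a * _]mulnC bin_scaled_mod ?ltn_pmod // lucas.
have e_lt : e < p := leq_ltn_trans e_le a_lt.
rewrite [p * q]mulnC divnMDl // modnMDl !divn_small // addn0.
rewrite (modn_small e_lt) (modn_small a_lt) bin0 mul1n.
have -> : (d == p ^ k * a) = (e == a).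
  apply/eqP/eqP => [d_eq | e_a]; first by rewrite /e d_eq mulKn.
  apply/eqP; rewrite eqn_leq [a * _]mulnC in d_le *; rewrite d_le -e_a.
  by rewrite mulnC leq_divM.
have [e_lt_a | a_lt_e | ->] := ltngtP e a; last by rewrite binn.
- by rewrite bin_small.
- by move: (leq_ltn_trans e_le a_lt_e); rewrite ltnn.
Qed.

(* Structure constants of S(lambda) modulo p: when j is a multiple of
   p^(k+1) and a < p, the product b(a p^k) b(j) reduces to b(j + a p^k). *)
Lemma Sconst_digit_mod m k a j h : a < p -> p ^ k.+1 %| j ->
  Sconst m (a * p ^ k) j h = (h == j + a * p ^ k) %[mod p].
Proof.
move=> a_lt /dvdnP[q ->]; rewrite /Sconst; set i := a * p ^ k.
have bin_top d : d <= i -> 'C(q * p ^ k.+1 + d, i) = (d == i) %[mod p].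
  by move=> d_le; rewrite mulnC bin_digit_mod.
case: eqP => [-> | h_neq].
  rewrite ifT; last by rewrite geq_max leq_addl leq_addr addnC /=.
  rewrite [i + _]addnC subnn bin0 muln1.
  rewrite -{3}(addnK i (q * p ^ k.+1)) bin_sub ?leq_addl //.
  by rewrite -modnMm bin_top // eqxx modnMm.
case: ifP => // /andP[]; rewrite geq_max => /andP[_ j_le h_le].
have d_neq : h - q * p ^ k.+1 != i.
  by apply/eqP => d_eq; apply: h_neq; rewrite -d_eq subnKC.
rewrite -mulnA -modnMml -(subnKC j_le) bin_top ?(negPf d_neq).
  by rewrite mod0n mul0n mod0n.
by rewrite leq_subLR addnC.
Qed.
End Lucas.

Definition digit (p u x : nat) : nat := x %/ p ^ u %% p.

Lemma divn_expS p k x : x %/ p ^ k.+1 = x %/ p ^ k %/ p.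
Proof. by rewrite expnSr divnMA. Qed.

Lemma digitS p u x : digit p u.+1 x = digit p u (x %/ p).
Proof. by rewrite /digit expnS divnMA. Qed.

Lemma lucas_digit_le p n k u : prime p -> ~~ (p %| 'C(n, k)) ->
  digit p u k <= digit p u n.
Proof.
move=> p_pr; elim: u n k => [|u IHu] n k npC.
  rewrite /digit !expn0 !divn1 leqNgt; apply: contra npC => lt_nk.
  by rewrite /dvdn lucas // (bin_small lt_nk) muln0 mod0n.
rewrite !digitS; apply: IHu; apply: contra npC => pC.
by rewrite /dvdn lucas // -/(dvdn _ _) dvdn_mulr.
Qed.

(* Selecting the shifted multiples of d: for a < p, h is of the form
   a d + d p y exactly when d divides h with quotient congruent to a mod p,
   and then y = h / d / p. *)
Lemma shifted_multiple (T : Type) (z : T) (Q : nat -> T) d p a h :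
  0 < d -> a < p ->
  (if a * d <= h then if d * p %| h - a * d then Q ((h - a * d) %/ (d * p))
                      else z else z)
  = if d %| h then if h %/ d %% p == a then Q (h %/ d %/ p) else z else z.
Proof.
move=> d_gt0 a_lt; have [/dvdnP[y ->] | ndh] := boolP (d %| h); last first.
  case: ifP => // a_le; case: ifP => // dvd_sub; case/negP: ndh.
  rewrite -(subnK a_le) dvdn_add ?dvdn_mull //.
  by rewrite (dvdn_trans _ dvd_sub) ?dvdn_mulr.
rewrite mulnK // leq_pmul2r // -mulnBl [(y - a) * d]mulnC.
rewrite dvdn_pmul2l // divnMl //.
have [a_le | y_lt] := leqP a y; last first.
  by rewrite ifN_eq // neq_ltn (leq_ltn_trans (leq_mod y p) y_lt).
rewrite -eqn_mod_dvd // (modn_small a_lt).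
case: eqP => // y_mod; congr Q.
by rewrite {1}(divn_eq y p) y_mod addnK mulnK // (leq_ltn_trans _ a_lt).
Qed.

(* Digit products: for a coefficient table c (position, digit) |-> c u a,
   [digit_prod p c k j x] is the product over the j base-p digits x_0, x_1,...
   of x of the entries c (k + u) x_u, and 0 if x has more than j digits. *)
Fixpoint digit_prod (p : nat) (c : nat -> nat -> nat) (k j x : nat) : nat :=
  if j is j'.+1 then c k (x %% p) * digit_prod p c k.+1 j' (x %/ p)
  else (x == 0).

Section DigitProducts.
Variables (p : nat) (c : nat -> nat -> nat).
Hypothesis p_pr : prime p.

Lemma digit_prod_below g :
  (forall u a, a < digit p u g -> c u a = 0) ->
  forall j k x, g %/ p ^ (k + j) = 0 -> x < g %/ p ^ k ->
  digit_prod p c k j x = 0.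
Proof.
move=> c_low; elim=> [|j IHj] k x; first by rewrite addn0 => ->.
rewrite -addSnnS /= => g_end x_lt.
have p_gt0 := prime_gt0 p_pr.
have : x %/ p <= g %/ p ^ k.+1 by rewrite divn_expS leq_div2r // ltnW.
rewrite leq_eqVlt => /orP[/eqP x_g | /IHj-> //]; last by rewrite muln0.
rewrite c_low ?mul0n // /digit.
move: x_lt x_g; rewrite divn_expS; set y := g %/ p ^ k => x_lt x_g.
rewrite {1}(divn_eq x p) {1}(divn_eq y p) x_g in x_lt.
by rewrite -(ltn_add2l (y %/ p * p)).
Qed.

Lemma digit_prod_at n g :
  (forall u, c u (digit p u g) = 'C(digit p u n, digit p u g)) ->
  forall j k, n %/ p ^ (k + j) = 0 -> g %/ p ^ (k + j) = 0 ->
  digit_prod p c k j (g %/ p ^ k) = 'C(n %/ p ^ k, g %/ p ^ k) %[mod p].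
Proof.
move=> c_diag; elim=> [|j IHj] k; first by rewrite addn0 => -> ->.
rewrite -addSnnS /= => n_end g_end.
rewrite -modnMmr -!divn_expS IHj // modnMmr c_diag [in RHS]lucas //.
by rewrite -!divn_expS mulnC.
Qed.

End DigitProducts.

(* The coefficients of b(0), b(3^u), b(2 3^u) in the u-th factor of e_{m,g},
   indexed by the digits G = g_u and A = (m + 2g)_u; -1 is written 2. *)
Definition efactor_coefs (G A : nat) : seq nat :=
  if (G == 0) && (A == 0) then [:: 1; 1; 2]
  else if (G == 1) && (A == 2) then [:: 0; 2; 1]
  else if (G == 0) && (A == 1) then [:: 1; 0; 2]
  else if (G == 2) && (A == 2) then [:: 0; 0; 1]
  else if (G == 0) && (A == 2) then [:: 1; 2; 1]
  else if (G == 1) && (A == 1) then [:: 0; 1; 2]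
  else [:: 1; 0; 0].

Definition efactor_coef (m g u a : nat) : nat :=
  nth 0 (efactor_coefs (digit 3 u g) (digit 3 u (m + 2 * g))) a.

Lemma efactor_coefs_low G A a : G <= A -> A < 3 -> a < G ->
  nth 0 (efactor_coefs G A) a = 0.
Proof.
by case: A => [|[|[|A]]] //; case: G => [|[|[|G]]] //; case: a => [|[|[|a]]].
Qed.

Lemma efactor_coefs_diag G A : G <= A -> A < 3 ->
  nth 0 (efactor_coefs G A) G = 'C(A, G).
Proof. by case: A => [|[|[|A]]] //; case: G => [|[|[|G]]]. Qed.

Local Open Scope ring_scope.

Lemma natr_congr {F : fieldType} {p : nat} (pF : p \in [pchar F]) {i j : nat} :
  (i = j %[mod p])%N -> i%:R = j%:R :> F.
Proof.
by move=> ij; rewrite -(GRing.natr_mod_pchar pF i) ij GRing.natr_mod_pchar.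
Qed.

Section SchurAlgebra.
Variables (F : fieldType) (m n : nat).
Local Notation b := (bS F n).

(* [dilate d Q] is the element sum_x Q x b(d x), truncated at lambda_2. *)
Definition dilate (d : nat) (Q : nat -> F) : Selt F n :=
  \row_(h < n.+1) if (d %| h)%N then Q (h %/ d)%N else 0.

Lemma Smul_entry (x y : Selt F n) h :
  Smul m x y 0 h =
    \sum_(i < n.+1) x 0 i * \sum_(j < n.+1) y 0 j * (Sconst m i j h)%:R.
Proof.
rewrite mxE; apply: eq_bigr => i _; rewrite mulr_sumr.
by apply: eq_bigr => j _; rewrite mulrA.
Qed.

Lemma Smul_sumZl (N : nat) (c : 'I_N -> F) (x : 'I_N -> Selt F n) y :
  Smul m (\sum_(a < N) c a *: x a) y = \sum_(a < N) c a *: Smul m (x a) y.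
Proof.
apply/rowP => h; rewrite Smul_entry summxE.
under [RHS]eq_bigr => a _ do rewrite mxE Smul_entry mulr_sumr.
rewrite exchange_big; apply: eq_bigr => i _.
rewrite summxE mulr_suml; apply: eq_bigr => a _.
by rewrite mxE mulrA.
Qed.

Lemma sum_pick (N v : nat) (T : nat -> F) :
  \sum_(i < N) ((i : nat) == v)%:R * T i = if (v < N)%N then T v else 0.
Proof.
case: ifP => [v_lt | v_ge].
  rewrite (bigD1 (Ordinal v_lt)) //= eqxx mul1r big1 ?addr0 // => i i_neq.
  by rewrite (introF eqP) ?mul0r // => i_v; case/eqP: i_neq; apply: val_inj.
rewrite big1 // => i _; rewrite (introF eqP) ?mul0r // => i_v.
by move: (ltn_ord i); rewrite i_v v_ge.
Qed.

Variables (p : nat) (pF : p \in [pchar F]).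

Lemma Smul_bS_dilate k a Q : (a < p)%N ->
  Smul m (b (a * p ^ k)) (dilate (p ^ k.+1) Q) =
  dilate (p ^ k) (fun x => if (x %% p == a)%N then Q (x %/ p)%N else 0).
Proof.
move=> a_lt; have p_gt0 := prime_gt0 (pcharf_prime pF).
apply/rowP => h; rewrite Smul_entry mxE -shifted_multiple ?expn_gt0 ?p_gt0 //.
under eq_bigr => i _ do rewrite mxE.
rewrite (sum_pick _ _ (fun i => \sum_(j < n.+1) _ * (Sconst m i j h)%:R)).
rewrite -expnSr; set d := (a * p ^ k)%N.
pose D (j : nat) := if (p ^ k.+1 %| j)%N then Q (j %/ p ^ k.+1)%N else 0.
have term (j : 'I_n.+1) : dilate (p ^ k.+1) Q 0 j * (Sconst m d j h)%:R =
    ((d <= h)%N && ((j : nat) == h - d)%N)%:R * D j.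
  rewrite mxE /D; case: ifP => [pj | _]; last by rewrite mulr0 mul0r.
  have S_j := Sconst_digit_mod p (pcharf_prime pF) m k a j h a_lt pj.
  rewrite (natr_congr pF S_j) mulrC.
  suff -> : ((h : nat) == j + d)%N = (d <= h)%N && ((j : nat) == h - d)%N by [].
  by apply/eqP/andP => [-> | [d_le /eqP ->]]; rewrite ?leq_addl ?addnK ?subnK.
under eq_bigr do rewrite term.
have [d_le | h_lt] := leqP d h; last first.
  by rewrite big1 ?if_same // => j _; rewrite mul0r.
rewrite sum_pick (leq_ltn_trans (leq_subr d h)) ?(leq_ltn_trans d_le) //.
Qed.

Lemma Smul_digits_dilate k (c : nat -> F) Q :
  Smul m (\sum_(a < p) c a *: b (a * p ^ k)) (dilate (p ^ k.+1) Q) =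
  dilate (p ^ k) (fun x => c (x %% p)%N * Q (x %/ p)%N).
Proof.
have p_gt0 := prime_gt0 (pcharf_prime pF).
rewrite Smul_sumZl; under eq_bigr => a _ do rewrite Smul_bS_dilate //.
apply/rowP => h; rewrite summxE !mxE; under eq_bigr => a _ do rewrite !mxE.
case: ifP => _; last by rewrite big1 // => a _; rewrite mulr0.
set x := (h %/ p ^ k)%N.
rewrite (bigD1 (Ordinal (ltn_pmod x p_gt0))) //= eqxx big1 ?addr0 // => a a_neq.
by rewrite ifN ?mulr0 //; apply: contra a_neq => /eqP x_a; apply/eqP/val_inj.
Qed.

Lemma foldr_digits_dilate (c : nat -> nat -> nat) j k :
  foldr (@Smul F m n) (b 0)
    [seq \sum_(a < p) (c u a)%:R *: b (a * p ^ u) | u <- iota k j] =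
  dilate (p ^ k) (fun x => (digit_prod p c k j x)%:R).
Proof.
elim: j k => [|j IHj] k /=.
  apply/rowP => h; rewrite !mxE; have [-> | h_gt0] := posnP h.
    by rewrite dvdn0 div0n.
  case: ifP => // pk_h.
  have p_gt0 := prime_gt0 (pcharf_prime pF).
  by rewrite eqn0Ngt divn_gt0 ?expn_gt0 ?p_gt0 // dvdn_leq.
rewrite IHj (Smul_digits_dilate k (fun a => (c k a)%:R)).
by apply/rowP => h; rewrite !mxE natrM.
Qed.

End SchurAlgebra.

Lemma efactor_digits (F : fieldType) (h3 : 3 \in [pchar F]) m n g u :
  efactor F m n g u =
    \sum_(a < 3) (efactor_coef m g u a)%:R *: bS F n (a * 3 ^ u).
Proof.
have two : 2%:R = - 1 :> F.
  by apply/eqP; rewrite -subr_eq0 opprK -(natrD _ 2 1) (GRing.pcharf0 h3).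
rewrite /efactor /efactor_coef /digit !big_ord_recr big_ord0 /=.
rewrite add0r mul0n mul1n.
rewrite /dig3; move: (_ %/ _ %% 3)%N (_ %/ _ %% 3)%N => G A.
rewrite /efactor_coefs.
by do ![case: ifP => _];
  rewrite /= ?scale0r ?scale1r ?two ?scaleN1r ?addr0 ?add0r // addrC.
Qed.

Lemma sum_range_pick (F : fieldType) (f : nat -> F) g n h : (h < n)%N ->
  \sum_(g <= i < n) f i * (h == i)%:R = if (g <= h)%N then f h else 0.
Proof.
move=> h_lt; case: ifP => [g_le | g_gt].
  rewrite (bigD1_seq h) ?mem_index_iota ?g_le ?iota_uniq //= eqxx mulr1.
  rewrite big1_seq ?addr0 // => i /andP[i_neq _].
  by rewrite eq_sym (negPf i_neq) mulr0.
rewrite big1_seq // => i /andP[_]; rewrite mem_index_iota => /andP[g_le _].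
by rewrite (introF eqP) ?mulr0 // => h_i; rewrite h_i g_le in g_gt.
Qed.

Lemma row_tail_decomp (F : fieldType) n (v : Selt F n) (f : nat -> F) g :
  (forall h : 'I_n.+1, v 0 h = f h) -> (forall x, (x < g)%N -> f x = 0) ->
  v = f g *: bS F n g + \sum_(g.+1 <= i < n.+1) f i *: bS F n i.
Proof.
move=> v_f f_low; apply/rowP => h; rewrite v_f !mxE summxE.
under eq_bigr => i _ do rewrite !mxE.
rewrite sum_range_pick //; have [h_lt | g_lt | ->] := ltngtP h g.
- by rewrite f_low ?mulr0 ?addr0.
- by rewrite mulr0 add0r.
- by rewrite mulr1 addr0.
Qed.

Section EmgCoefficients.
Variables (m g n : nat).

Definition emg_coef (x : nat) : nat :=
  digit_prod 3 (efactor_coef m g) 0 (m + 2 * g + n).+1 x.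

Lemma e_mg_entry {F : fieldType} (h3 : 3 \in [pchar F]) (h : 'I_n.+1) :
  e_mg F m n g 0 h = (emg_coef h)%:R.
Proof.
rewrite /e_mg (eq_map (efactor_digits F h3 m n g)) foldr_digits_dilate //.
by rewrite mxE expn0 dvd1n divn1.
Qed.

Hypothesis B_ndvd : ~~ (3 %| 'C(m + 2 * g, g))%N.

Let digits_end x :
  (x <= m + 2 * g + n)%N -> (x %/ 3 ^ (0 + (m + 2 * g + n).+1) = 0)%N.
Proof.
move=> x_le; rewrite divn_small // add0n (leq_ltn_trans x_le) //.
by rewrite ltnW // ltn_expl.
Qed.

(* By Lucas, the digits of g are bounded by those of m + 2g. *)
Let digit_le u : (digit 3 u g <= digit 3 u (m + 2 * g))%N.
Proof. exact: lucas_digit_le. Qed.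

Lemma emg_coef_below x : (x < g)%N -> emg_coef x = 0%N.
Proof.
move=> x_lt; apply: (digit_prod_below 3 (efactor_coef m g) isT g).
- by move=> u a; apply: efactor_coefs_low; rewrite ?digit_le ?ltn_mod.
- by apply: digits_end; lia.
- by rewrite expn0 divn1.
Qed.

Lemma emg_coef_at : (emg_coef g = 'C(m + 2 * g, g) %[mod 3])%N.
Proof.
have := digit_prod_at 3 (efactor_coef m g) isT (m + 2 * g) g _
  (m + 2 * g + n).+1 0.
rewrite expn0 !divn1; apply=> //; last by apply: digits_end; lia.
- by move=> u; apply: efactor_coefs_diag; rewrite ?digit_le ?ltn_mod.
- by apply: digits_end; lia.
Qed.

End EmgCoefficients.

Theorem lemma3p3 (F : fieldType) (h3 : (3 \in [pchar F])%N)
  (l1 l2 : nat) (hl : (l2 <= l1)%N) (g : nat)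
  (hB : ~~ (3 %| Bmg (l1 - l2) g)%N) :
  (exists alpha : nat -> nat,
     e_mg F (l1 - l2) l2 g =
       (Bmg (l1 - l2) g)%:R *: bS F l2 g
       + \sum_(g.+1 <= i < l2.+1) (alpha i)%:R *: bS F l2 i)
  /\ (e_mg F (l1 - l2) l2 g != 0 <-> (g <= l2)%N).
Proof.
set m := (l1 - l2)%N; pose coef := emg_coef m g l2.
have coef_low x : (x < g)%N -> (coef x)%:R = 0 :> F.
  by move=> x_lt; rewrite /coef emg_coef_below.
have coef_g : (coef g)%:R = (Bmg m g)%:R :> F.
  by have /(natr_congr h3) := emg_coef_at m g l2 hB.
have e_entry := e_mg_entry m g l2 h3.
split.
  exists coef; rewrite -coef_g.
  exact: row_tail_decomp e_entry coef_low.
split => [e_neq0 | g_le].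
  rewrite leqNgt; apply: contra e_neq0 => l2_lt; apply/eqP/rowP => h.
  by rewrite e_entry mxE coef_low // (leq_trans (ltn_ord h)).
apply/eqP => /rowP /(_ (Ordinal (g_le : (g < l2.+1)%N))).
rewrite e_entry mxE coef_g => /eqP.
by rewrite -(GRing.dvdn_pcharf h3) (negPf hB).
Qed.
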